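(* Let $G$ be a connected simple graph and let $e=uv\in E(G)$ be an edge that is not a bridge of $G$. Then $$\chi_{dom}(G)-1\leq \chi_{dom}(G-e)\leq \chi_{dom}(G)+2.$$
   Context: All graphs are finite and simple. A dominated coloring (dom-coloring) of a graph $H$ is a proper vertex coloring of $H$ such that for every color class $C$ there is a vertex $x\in V(H)$ adjacent to every vertex of $C$ (i.e. $C\subseteq N_H(x)$); we say $C$ is dominated by $x$. The dominated chromatic number $\chi_{dom}(H)$ is the minimum number of colors in a dominated coloring of $H$ (considered for graphs in which such a coloring exists). $G-e$ denotes the graph obtained from $G$ by deleting the edge $e$ (keeping all vertices). *)

From mathcomp Require Import all_boot.
Set Implicit Arguments. Unset Strict Implicit. Unset Printing Implicit Defensive.

Section Graphs.
Variable T : finType.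

Definition simple_graph (g : rel T) : Prop := symmetric g /\ irreflexive g.

Definition connected (g : rel T) : Prop := forall x y, connect g x y.

Definition del_edge (g : rel T) (u v : T) : rel T :=
  fun x y => g x y && ~~ (((x == u) && (y == v)) || ((x == v) && (y == u))).

Definition is_bridge (g : rel T) (u v : T) : Prop :=
  g u v /\ exists x y, connect g x y /\ ~~ connect (del_edge g u v) x y.

(* c : T -> 'I_k is a dominated coloring of g with (at most) k colors:
   proper, and every color class C is contained in N(x) for some x. *)
Definition dom_coloring (g : rel T) (k : nat) (c : {ffun T -> 'I_k}) : bool :=
  [forall x, forall y, g x y ==> (c x != c y)] &&
  [forall i : 'I_k, exists x, forall y, (c y == i) ==> g x y].

Definition has_dom_coloring (g : rel T) (k : nat) : bool :=
  [exists c : {ffun T -> 'I_k}, dom_coloring g c].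

(* Whenever a dominated coloring exists, one with at most #|T| colors exists
   (drop empty classes), so searching k in 0..#|T| is exhaustive. *)
Definition chi_dom (g : rel T) : nat :=
  find (has_dom_coloring g) (iota 0 #|T|.+1).

End Graphs.

From mathcomp Require Import all_boot.

(* Both bounds come from one move: a vertex w having some neighbour may be
   given a fresh colour of its own, the singleton class {w} being dominated by
   that neighbour.  A dominated colouring of G - e becomes one of G after
   recolouring v, since uv is the only new edge and its class is dominated by
   the same vertices as before, so chi_dom G <= chi_dom (G - e) + 1.
   Conversely, in a dominated colouring of G only the classes containing u or
   v can lose their dominator in G - e; recolouring both u and v gives
   chi_dom (G - e) <= chi_dom G + 2, the fresh classes being dominated because
   G - e is still connected.  Connectivity also guarantees that no vertex is
   isolated, so dominated colourings exist and chi_dom is their minimum. *)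

Set Implicit Arguments.
Unset Strict Implicit.
Unset Printing Implicit Defensive.

Section DominatedColorings.
Variable T : finType.
Implicit Types (g h : rel T) (A B : pred T).

Definition dom_coloring_on h A k (c : T -> 'I_k) : Prop :=
  (forall x y, A x -> A y -> h x y -> c x != c y) /\
  (forall i, exists x, forall y, A y -> c y = i -> h x y).

Lemma has_dom_coloringP h k :
  has_dom_coloring h k <-> exists c : T -> 'I_k, dom_coloring_on h predT c.
Proof.
split.
- case/existsP=> c /andP[/forallP proper /forallP dom]; exists c; split.
  + by move=> x y _ _ hxy; have /forallP/(_ y)/implyP := proper x; apply.
  + move=> i; have /existsP[x /forallP xdom] := dom i; exists x => y _ cy.
    by have /implyP := xdom y; apply; rewrite cy.
- case=> c [proper dom]; apply/existsP; exists (finfun c); apply/andP; split.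
  + by apply/'forall_forallP=> x y; apply/implyP; rewrite !ffunE; apply: proper.
  + apply/forallP=> i; have [x xdom] := dom i; apply/existsP; exists x.
    by apply/forallP=> y; rewrite ffunE; apply/implyP=> /eqP; apply: xdom.
Qed.

Lemma dom_coloring_on_transfer h h' A B k (c : T -> 'I_k) :
  {subset B <= A} ->
  (forall x y, B x -> B y -> h' x y -> h x y) ->
  (forall x y, B y -> h x y -> h' x y) ->
  dom_coloring_on h A c -> dom_coloring_on h' B c.
Proof.
move=> sBA edge_back edge_fwd [proper dom]; split.
- move=> x y Bx By h'xy; apply: proper; [exact: sBA | exact: sBA | exact: edge_back].
- move=> i; have [x xdom] := dom i; exists x => y By cy.
  by apply: edge_fwd => //; apply: xdom => //; apply: sBA.
Qed.

Definition recolor k (c : T -> 'I_k) (w : T) (x : T) : 'I_k.+1 :=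
  if x == w then ord_max else lift ord_max (c x).

Lemma dom_coloring_on_recolor h A k (c : T -> 'I_k) w :
  irreflexive h -> (exists x, h x w) ->
  dom_coloring_on h A c -> dom_coloring_on h (predU1 w A) (recolor c w).
Proof.
move=> hirr [xw hxw] [proper dom]; rewrite /recolor; split.
- move=> x y /predU1P Ax /predU1P Ay hxy.
  have [xw'|xw'] := eqVneq x w; have [yw'|yw'] := eqVneq y w.
  + by move: hxy; rewrite xw' yw' hirr.
  + exact: neq_lift.
  + by rewrite eq_sym neq_lift.
  + rewrite (inj_eq lift_inj); apply: proper => //.
    * by case: Ax => // /eqP; rewrite (negbTE xw').
    * by case: Ay => // /eqP; rewrite (negbTE yw').
- move=> i; case: (unliftP ord_max i) => [j ->|->].
  + have [x xdom] := dom j; exists x => y /predU1P Ay.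
    have [_|yw'] := eqVneq y w; first by move/eqP; rewrite (negbTE (neq_lift _ _)).
    move/lift_inj; apply: xdom.
    by case: Ay => // /eqP; rewrite (negbTE yw').
  + exists xw => y _; have [-> //|_] := eqVneq y w.
    by move/eqP; rewrite eq_sym (negbTE (neq_lift _ _)).
Qed.

Lemma has_dom_coloring_card h :
  irreflexive h -> (forall y, exists x, h x y) -> has_dom_coloring h #|T|.
Proof.
move=> hirr nbr; apply/has_dom_coloringP; exists enum_rank; split.
- move=> x y _ _ hxy; rewrite (inj_eq enum_rank_inj).
  by apply: contraTneq hxy => ->; rewrite hirr.
- move=> i; have [x hx] := nbr (enum_val i); exists x => y _ yi.
  by rewrite -(enum_rankK y) yi.
Qed.

Lemma chi_domP h : has_dom_coloring h #|T| -> has_dom_coloring h (chi_dom h).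
Proof.
move=> hT; have hs : has (has_dom_coloring h) (iota 0 #|T|.+1).
  by apply/hasP; exists #|T|; rewrite // mem_iota add0n ltnSn.
have lt : chi_dom h < #|T|.+1 by rewrite /chi_dom -[X in _ < X](size_iota 0 #|T|.+1) -has_find.
by have := nth_find 0 hs; rewrite nth_iota.
Qed.

Lemma chi_dom_min h k :
  has_dom_coloring h #|T| -> has_dom_coloring h k -> chi_dom h <= k.
Proof.
have chi_le m : m <= #|T| -> has_dom_coloring h m -> chi_dom h <= m.
  move=> mT hm; rewrite leqNgt; apply/negP=> lt.
  by have := before_find 0 lt; rewrite nth_iota ?add0n ?hm.
move=> hT hk; have [kT|/ltnW Tk] := leqP k #|T|; first exact: chi_le.
exact: leq_trans (chi_le _ _ hT) Tk.
Qed.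

Lemma connected_neighbor g (u v : T) :
  symmetric g -> connected g -> u != v -> forall y, exists x, g x y.
Proof.
move=> gsym gcon uv y; pose z := if y == u then v else u.
have zy : z != y by rewrite /z; case: (eqVneq y u) => [->|yu]; rewrite eq_sym.
have /connectP[[|x p] /= path_p last_p] := gcon y z.
  by rewrite last_p eqxx in zy.
by exists x; rewrite gsym; case/andP: path_p.
Qed.

Section DeleteEdge.
Variables (g : rel T) (u v : T).
Let d := del_edge g u v.

Lemma del_edge_sub x y : d x y -> g x y.
Proof. by case/andP. Qed.

Lemma del_edge_keep x y : g x y -> ~~ ((x == u) && (y == v) || (x == v) && (y == u)) -> d x y.
Proof. by move=> gxy keep; apply/andP. Qed.

Lemma del_edge_irr : irreflexive g -> irreflexive d.
Proof. by move=> girr x; rewrite /d /del_edge girr. Qed.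

Lemma del_edge_sym : symmetric g -> symmetric d.
Proof.
by move=> gsym x y; rewrite /d /del_edge gsym orbC (andbC (y == u)) (andbC (y == v)).
Qed.

Lemma del_edge_connected : connected g -> g u v -> ~ is_bridge g u v -> connected d.
Proof.
move=> gcon guv nobridge x y; apply/negPn/negP=> nc.
by apply: nobridge; split=> //; exists x, y.
Qed.

Lemma has_dom_coloring_add_edge k :
  irreflexive g -> g u v -> has_dom_coloring d k -> has_dom_coloring g k.+1.
Proof.
move=> girr guv /has_dom_coloringP[c cd]; apply/has_dom_coloringP.
exists (recolor c v).
have cg : dom_coloring_on g (predC1 v) c.
  apply: dom_coloring_on_transfer cd => // [x y xv yv gxy|x y _].
    by apply: del_edge_keep; rewrite // (negbTE xv) (negbTE yv) andbF.
  exact: del_edge_sub.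
have := dom_coloring_on_recolor girr (ex_intro _ u guv) cg.
by apply: dom_coloring_on_transfer => // x _; rewrite !inE orbN.
Qed.

Lemma has_dom_coloring_del_edge k :
  irreflexive g -> (exists x, d x u) -> (exists x, d x v) ->
  has_dom_coloring g k -> has_dom_coloring d k.+2.
Proof.
move=> girr [xu dxu] [xv dxv] /has_dom_coloringP[c cg]; apply/has_dom_coloringP.
have dirr := del_edge_irr girr.
exists (recolor (recolor c u) v).
have cd : dom_coloring_on d [pred y | (y != u) && (y != v)] c.
  apply: dom_coloring_on_transfer cg => // [x y _ _|x y /andP[yu yv] gxy].
    exact: del_edge_sub.
  by apply: del_edge_keep; rewrite // (negbTE yu) (negbTE yv) !andbF.
have := dom_coloring_on_recolor dirr (ex_intro _ xv dxv)
          (dom_coloring_on_recolor dirr (ex_intro _ xu dxu) cd).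
apply: dom_coloring_on_transfer => // x _.
by rewrite !inE; case: eqVneq => //= _; case: eqVneq => //= _; case: eqVneq.
Qed.

End DeleteEdge.
End DominatedColorings.

Theorem theorem2p1 (T : finType) (g : rel T) (u v : T) :
  simple_graph g -> connected g -> g u v -> ~ is_bridge g u v ->
  chi_dom g - 1 <= chi_dom (del_edge g u v) <= chi_dom g + 2.
Proof.
move=> [gsym girr] gcon guv nobridge.
have uv : u != v by apply: contraTneq guv => ->; rewrite girr.
have dnbr := connected_neighbor (del_edge_sym u v gsym)
               (del_edge_connected gcon guv nobridge) uv.
have gT := has_dom_coloring_card girr (connected_neighbor gsym gcon uv).
have dT := has_dom_coloring_card (del_edge_irr u v girr) dnbr.
apply/andP; split.
- rewrite leq_subLR add1n; apply: chi_dom_min gT _.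
  exact: has_dom_coloring_add_edge girr guv (chi_domP dT).
- rewrite addn2; apply: chi_dom_min dT _.
  exact: has_dom_coloring_del_edge girr (dnbr u) (dnbr v) (chi_domP gT).
Qed.
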